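(* Let $G$ be a locally compact Hausdorff group acting continuously on a locally compact Hausdorff space $X$, and let $\alpha$ be the induced action on $C_0(X)$, $(\alpha_gf)(x)=f(xg)$. The $G$-action on $X$ is free if and only if $$\mathrm{span}\{f_1\alpha_{(\cdot)}(f_2): f_1,f_2\in C_c(X)\}$$ is dense in $C(G,C(X))$ for the $\kappa$-topology, where $(f_1\alpha_{(\cdot)}(f_2))(g)=f_1\alpha_g(f_2)$.
   Context: $C_c(X)$ is the algebra of compactly supported continuous functions, $C(X)$ all continuous complex functions with the compact-open topology (seminorms $p_L(h)=\sup_{x\in L}|h(x)|$, $L$ compact). $C(G,C(X))$ is the $*$-algebra of continuous maps $G\to C(X)$ with the $\kappa$-topology given by the seminorms $u\mapsto\sup_{g\in K}p_L(u(g))$, $K\subseteq G$, $L\subseteq X$ compact. The action is free if $xg=x$ implies $g=e$. *)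

(* Complex scalars: C := (R[i])^o for R : realType,
   carrying the normed/topological structure of a numClosedFieldType. *)
From HB Require Import structures.
From mathcomp Require Import all_boot all_order all_algebra.
From mathcomp Require Import all_classical all_reals all_analysis.
From mathcomp Require Import complex.
Import numFieldTopology.Exports numFieldNormedType.Exports.
Set Implicit Arguments. Unset Strict Implicit. Unset Printing Implicit Defensive.
Import Order.TTheory GRing.Theory Num.Theory.
Local Open Scope ring_scope.
Local Open Scope classical_set_scope.

Definition Cplx (R : realType) : normedModType R[i] := (R[i])^o.

Definition is_topological_group (G : topologicalType)
  (mul : G -> G -> G) (inv : G -> G) (e : G) : Prop :=
  [/\ (forall a b c, mul a (mul b c) = mul (mul a b) c),
      (forall a, mul e a = a /\ mul a e = a),
      (forall a, mul (inv a) a = e /\ mul a (inv a) = e),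
      continuous (fun p : G * G => mul p.1 p.2)
    & continuous inv].

Definition is_continuous_right_action (G X : topologicalType)
  (mul : G -> G -> G) (e : G) (act : X -> G -> X) : Prop :=
  [/\ (forall x, act x e = x),
      (forall x g h, act (act x g) h = act x (mul g h))
    & continuous (fun p : X * G => act p.1 p.2)].

Definition free_action (G X : Type) (e : G) (act : X -> G -> X) : Prop :=
  forall x g, act x g = x -> g = e.

Definition Cc (R : realType) (X : topologicalType) (f : X -> Cplx R) : Prop :=
  continuous f /\ compact (closure [set x | f x != 0]).

(* C(G, C(X)) with C(X) carrying the compact-open topology, given by the
   seminorms p_L(h) = sup_{x in L} |h x| : u g is continuous for each g, and
   g |-> u g is continuous for every seminorm p_L. *)
Definition CGCX (R : realType) (G X : topologicalType) (u : G -> X -> Cplx R) : Prop :=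
  (forall g, continuous (u g)) /\
  (forall (g0 : G) (L : set X) (eps : R), compact L -> 0 < eps ->
     \forall g \near g0, forall x, L x -> `|u g x - u g0 x| <= (eps%:C)%C).

(* span{ f1 alpha_(.)(f2) : f1, f2 in C_c(X) }, where
   (f1 alpha_(.)(f2))(g) = x |-> f1 x * f2 (x g) *)
Definition alpha_span (R : realType) (G X : topologicalType)
  (act : X -> G -> X) (v : G -> X -> Cplx R) : Prop :=
  exists (n : nat) (c : 'I_n -> Cplx R) (f1 f2 : 'I_n -> X -> Cplx R),
    (forall i, Cc (f1 i) /\ Cc (f2 i)) /\
    v = (fun g x => \sum_(i < n) c i * (f1 i x * f2 i (act x g))).

(* density of a set S of C(G,C(X)) in the kappa-topology, given by the
   seminorms u |-> sup_{g in K} p_L(u g), K, L compact (a directed family) *)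
Definition kappa_dense (R : realType) (G X : topologicalType)
  (S : (G -> X -> Cplx R) -> Prop) : Prop :=
  forall u, CGCX u ->
  forall (K : set G) (L : set X) (eps : R), compact K -> compact L -> 0 < eps ->
  exists v, S v /\ forall g x, K g -> L x -> `|u g x - v g x| <= (eps%:C)%C.

From HB Require Import structures.
From mathcomp Require Import all_boot all_order all_algebra.
From mathcomp Require Import all_classical all_reals all_analysis.
From mathcomp Require Import complex.
From mathcomp Require Import lra finmap.
Import numFieldTopology.Exports numFieldNormedType.Exports.
Set Implicit Arguments. Unset Strict Implicit. Unset Printing Implicit Defensive.
Import Order.TTheory GRing.Theory Num.Theory.
Local Open Scope ring_scope.
Local Open Scope classical_set_scope.

(* (->) Freeness makes (x, g) ↦ (x, xg) injective, so on the compact set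
   L × K the map u, read as a function of the pair (x, xg), is uniformly
   continuous in the following sense: every z in X has a neighbourhood N(z)
   such that u varies by at most ε between points of L × K whose first
   coordinates lie in a common N(x0) and whose coordinates xg lie in a common
   N(y0). A partition of unity (φ_i) subordinate to N on the compact set
   L ∪ LK then yields the approximation Σ_ij a_ij φ_i(x) φ_j(xg), where a_ij
   is the value of u at any point where φ_i(x) φ_j(xg) does not vanish.
   (<-) Every v in the span satisfies v(g)(x) = v(h)(x) whenever xg = xh. If
   xg = x with g ≠ e, the map g ↦ f(g) (constant in x), for a Urysohn
   function f with f(g) = 0 and f(e) = 1, is within 1/4 of no such v on
   {e, g} × {x}. *)

Section real_complex.
Variable R : realType.

Lemma norm_realC (r : R) : `|(r%:C)%C : R[i]| = (`|r|%:C)%C.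
Proof. by rewrite normc_def /= expr0n addr0 sqrtr_sqr. Qed.

Lemma gt0_realC (e : R[i]) : 0 < e -> e = ((complex.Re e)%:C)%C /\ 0 < complex.Re e.
Proof. by rewrite ltcE => /andP[/eqP + ]; case: e => a b /= -> ->. Qed.

Lemma continuous_realC : continuous (fun r : R => (r%:C)%C : Cplx R).
Proof.
move=> r; apply/cvgrPdist_lt => e /gt0_realC[eE e0].
near=> s; rewrite /= -raddfB /= norm_realC eE ltcR.
by near: s; exists (complex.Re e).
Unshelve. all: by end_near.
Qed.

Lemma Cc_realC (X : topologicalType) (f : X -> R) :
  continuous f -> compact (closure [set x | f x != 0]) ->
  Cc (fun x => (f x)%:C%C : Cplx R).
Proof.
move=> fc cf; split.
  by move=> x; apply: (@continuous_comp _ _ _ f); [exact: fc | exact: continuous_realC].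
suff -> : [set x | (f x)%:C%C != 0 :> Cplx R] = [set x | f x != 0] by [].
by apply/funext => x /=; rewrite eq_complex /= eqxx andbT.
Qed.

End real_complex.

Definition pointed_at (X : topologicalType) (x0 : X) : Type := X.
HB.instance Definition _ (X : topologicalType) (x0 : X) :=
  Topological.copy (pointed_at x0) X.
HB.instance Definition _ (X : topologicalType) (x0 : X) :=
  isPointed.Build (pointed_at x0) x0.

(* [compact_cover] is only stated for pointed spaces; a nonempty compact set
   provides the point. *)
Lemma compact_finite_subcover (X : topologicalType) (A : set X)
    (I : choiceType) (D : set I) (f : I -> set X) :
  compact A -> (forall i, D i -> open (f i)) -> A `<=` cover D f ->
  finite_subset_cover D f A.
Proof.
move=> cA oF AF; have [->|/set0P[x0 _]] := eqVneq A set0.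
  by exists fset0.
have : @compact (pointed_at x0) A by [].
by rewrite compact_cover; apply.
Qed.

Lemma open_preimage_pair (T U : topologicalType) (f g : T -> U) (A B : set U) :
  continuous f -> continuous g -> open A -> open B ->
  open [set w | A (f w) /\ B (g w)].
Proof.
move=> fc gc oA oB; apply: openI.
  by apply: open_comp => // x _; exact: fc.
by apply: open_comp => // x _; exact: gc.
Qed.

Section locally_compact_hausdorff.
Variable X : topologicalType.
Hypotheses (lcX : locally_compact [set: X]) (hX : hausdorff_space X).

Lemma open_closure_subset (x : X) (O : set X) : open O -> O x ->
  exists U, [/\ open U, U x & closure U `<=` O].
Proof.
move=> oO Ox; have [V] := @lcX x I; rewrite withinET => Vx [cV _].
have [W Wx WO] := compact_regular hX cV Vx (open_nbhs_nbhs (conj oO Ox)).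
exists W°; split; first exact: open_interior.
  exact: nbhs_singleton (nbhs_interior Wx).
exact: subset_trans (closureS (@interior_subset _ _)) WO.
Qed.

Lemma separate_closures (x y : X) : x != y ->
  exists U1 U2 : set X,
    [/\ open U1, open U2, U1 x, U2 y & closure U1 `&` closure U2 = set0].
Proof.
move=> xy; have := hX; rewrite open_hausdorff => hX'.
case: (hX' x y xy) => -[A1 A2] /= [A1x A2y] [oA1 oA2 A12].
move: A1x A2y A12 => /set_mem A1x /set_mem A2y /eqP A12.
have [U1 [oU1 U1x cU1]] := open_closure_subset oA1 A1x.
have [U2 [oU2 U2y cU2]] := open_closure_subset oA2 A2y.
exists U1, U2; split => //; apply/seteqP; split => // z [/cU1 ? /cU2 ?].
by rewrite -A12.
Qed.

End locally_compact_hausdorff.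

Section partition_of_unity.
Variables (R : realType) (X : topologicalType).
Hypotheses (lcX : locally_compact [set: X]) (hX : hausdorff_space X).

Lemma bump_function (x : X) (N : set X) : nbhs x N ->
  exists psi : X -> R, [/\ continuous psi, (forall y, 0 <= psi y), psi x = 1,
    [set y | psi y != 0] `<=` N & compact (closure [set y | psi y != 0])].
Proof.
move=> Nx; have [U] := @lcX x I; rewrite withinET => Ux [cU clU].
pose O := (N `&` U)°.
have Ox : nbhs x O by apply: nbhs_interior; exact: filterI.
have clCO : closed (~` O) by rewrite closedC; exact: open_interior.
have nCOx : ~ (~` O) x by move/(_ (nbhs_singleton Ox)).
have sep := @locally_compact_completely_regular X R lcX hX x _ clCO nCOx.
pose f := @Urysohn X R [set x] (~` O).
have f01 y : 0 <= f y <= 1.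
  have : `[0, 1]%classic (f y) by apply: Urysohn_range; exists y.
  by rewrite /= in_itv.
have f0 : f x = 0 by apply: (Urysohn_sub0 sep); exists x.
have suppO : [set y | 1 - f y != 0] `<=` O.
  move=> y /= + ; apply: contraPP => Oy.
  suff -> : f y = 1 by rewrite subrr eqxx.
  by apply: (Urysohn_sub1 sep); exists y.
exists (fun y => 1 - f y); split.
- by move=> y; apply: continuousB; [exact: cvg_cst | exact: Urysohn_continuous].
- by move=> y; rewrite subr_ge0; case/andP: (f01 y).
- by rewrite f0 subr0.
- by move=> y /suppO /interior_subset [].
- apply: subclosed_compact (@closed_closure _ _) cU _.
  rewrite [X in _ `<=` X](closure_id U).1 //.
  by apply: closureS => y /suppO /interior_subset [].
Qed.

Lemma normalized_family (J : finType) (psi : J -> X -> R) (S : set X) (delta : R) :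
  0 < delta -> (forall i, continuous (psi i)) -> (forall i y, 0 <= psi i y) ->
  (forall y, S y -> exists i, delta <= psi i y) ->
  exists phi : J -> X -> R,
    [/\ (forall i, continuous (phi i)), (forall i y, 0 <= phi i y),
        (forall i, [set y | phi i y != 0] = [set y | psi i y != 0]) &
        (forall y, S y -> \sum_i phi i y = 1)].
Proof.
move=> delta0 psic psi0 Spsi.
pose sigma y := \sum_i psi i y.
have sigmac : continuous sigma.
  move=> y; apply: (@continuous_big _ _ +%R 0 xpredT _ _ _ psi) => //.
  exact: add_continuous.
have den0 y : 0 < Num.max delta (sigma y) by rewrite lt_max delta0.
have sigmaS y : S y -> Num.max delta (sigma y) = sigma y.
  move=> /Spsi[i deltai]; apply/max_idPr; apply: le_trans deltai _.
  by rewrite /sigma (bigD1 i) //= lerDl; apply: sumr_ge0.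
exists (fun i y => psi i y / Num.max delta (sigma y)); split.
- move=> i y; apply: (@continuousM _ _ (psi i)); first exact: psic.
  apply: (@continuousV _ _ (fun y => Num.max delta (sigma y))).
    by rewrite gt_eqF.
  by apply: (@continuous_max _ _ (fun=> delta)); [exact: cvg_cst | exact: sigmac].
- by move=> i y; apply: divr_ge0; [exact: psi0 | exact: ltW].
- move=> i; apply/seteqP; split => y /=;
    by rewrite mulf_eq0 invr_eq0 (gt_eqF (den0 y)) orbF.
- move=> y Sy /=; have := den0 y; rewrite sigmaS // => sigma0.
  by rewrite -mulr_suml -/(sigma y) divff // gt_eqF.
Qed.

Lemma compact_partition_of_unity (S : set X) (N : X -> set X) : compact S ->
  (forall x, S x -> nbhs x (N x)) ->
  exists (J : finType) (phi : J -> X -> R) (c : J -> X),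
    [/\ (forall j, continuous (phi j)), (forall j y, 0 <= phi j y),
        (forall j, [set y | phi j y != 0] `<=` N (c j)),
        (forall j, compact (closure [set y | phi j y != 0])) &
        (forall y, S y -> \sum_j phi j y = 1)].
Proof.
move=> cS SN.
have /choice[Psi HPsi] : forall x, exists psi : X -> R, S x ->
    [/\ continuous psi, (forall y, 0 <= psi y), psi x = 1,
        [set y | psi y != 0] `<=` N x & compact (closure [set y | psi y != 0])].
  move=> x; have [Sx|nSx] := pselect (S x); last by exists (fun=> 0) => /nSx.
  by have [psi ?] := bump_function (SN x Sx); exists psi.
pose O x := Psi x @^-1` [set r | 2^-1 < r].
have oO x : S x -> open (O x).
  case/HPsi => Psic _ _ _ _; apply: open_comp => [y _|]; [exact: Psic | exact: open_gt].
have SO : S `<=` cover S O.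
  move=> x Sx; exists x => //; have [_ _ Psix1 _ _] := HPsi x Sx.
  by rewrite /O /preimage /= Psix1 invf_lt1 // ltr1n.
have [D DS SD] := compact_finite_subcover cS oO SO.
have DS' (j : D) : S (val j) by rewrite -in_setE; apply: DS; exact: valP.
have Psic (j : D) : continuous (Psi (val j)) by case: (HPsi _ (DS' j)).
have Psi0 (j : D) y : 0 <= Psi (val j) y by case: (HPsi _ (DS' j)).
have SPsi y : S y -> exists j : D, 2^-1 <= Psi (val j) y.
  by move=> /SD[x xD Oxy]; exists (FSetSub xD); exact: ltW.
have half0 : 0 < 2^-1 :> R by rewrite invr_gt0.
have [phi [phic phi0 phiPsi phi1]] := normalized_family half0 Psic Psi0 SPsi.
exists D, phi, val; split => // j; rewrite phiPsi; by case: (HPsi _ (DS' j)).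
Qed.

End partition_of_unity.

Definition avoid_closure (X : topologicalType) (V : set X) (x0 : X) :=
  [set x | ~ closure V x0 -> ~ closure V x].

Lemma nbhs_avoid_closure (X : topologicalType) (V : set X) (x0 : X) :
  nbhs x0 (avoid_closure V x0).
Proof.
have [Vx0|nVx0] := pselect (closure V x0).
  by apply: filterS filterT => x _ /(_ Vx0).
have -> : avoid_closure V x0 = ~` closure V.
  apply/funext => x; apply/propext.
  by split => [avx|nVx _]; [exact: avx nVx0 | exact: nVx].
by apply: open_nbhs_nbhs; split => //; exact/closed_openC/closed_closure.
Qed.

Lemma avoid_closureP (X : topologicalType) (V : set X) (x0 x : X) :
  avoid_closure V x0 x -> V x -> closure V x0.
Proof. by move=> avx Vx; apply: contrapT => /avx; apply; exact: subset_closure. Qed.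

Section oscillation.
Variables (T X : topologicalType).
Hypotheses (lcX : locally_compact [set: X]) (hX : hausdorff_space X).
Variables (pi1 pi2 : T -> X) (P : set T).
Hypotheses (pi1c : continuous pi1) (pi2c : continuous pi2) (cP : compact P).
Hypothesis pi_inj : forall q q', pi1 q = pi1 q' -> pi2 q = pi2 q' -> q = q'.
Variables (K : numFieldType) (V : pseudoMetricNormedZmodType K).
Variables (h : T -> V) (eps : K).
Hypotheses (hc : continuous h) (eps0 : 0 < eps).

Definition small_oscillation (W : set (T * T)) :=
  forall w, W w -> `|h w.1 - h w.2| <= eps.

Definition separated_by (W : set (T * T)) (U1 U2 : set X) :=
  closure U1 `&` closure U2 = set0 /\
  exists2 f, f = pi1 \/ f = pi2 & forall w, W w -> U1 (f w.1) /\ U2 (f w.2).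

Lemma small_or_separated_nbhs (w : T * T) :
  exists d : set (T * T) * (set X * set X),
    [/\ open d.1, d.1 w & small_oscillation d.1 \/ separated_by d.1 d.2.1 d.2.2].
Proof.
have fstc : continuous (@fst T T) by move=> ?; exact: cvg_fst.
have sndc : continuous (@snd T T) by move=> ?; exact: cvg_snd.
case: w => q q'; have [<-|qq'] := eqVneq q q'.
  have eps20 : 0 < eps / 2 by rewrite divr_gt0.
  have : nbhs q [set p | `|h q - h p| <= eps / 2].
    exact: (cvgrPdist_le _ _).1 (@hc q) _ eps20.
  rewrite nbhsE => -[B [oB Bq] Bh].
  exists ([set w | B w.1 /\ B w.2], (set0, set0)); split => //=.
    exact: open_preimage_pair.
  left=> w [/Bh h1 /Bh h2]; rewrite [eps]splitr.
  by apply: le_trans (ler_distD (h q) _ _) _; rewrite lerD // distrC.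
have [f f12 fqq'] : exists2 f, f = pi1 \/ f = pi2 & f q != f q'.
  have [e1|] := eqVneq (pi1 q) (pi1 q'); last by exists pi1; [left|].
  have [e2|] := eqVneq (pi2 q) (pi2 q'); last by exists pi2; [right|].
  by move/eqP: qq'; case; exact: pi_inj.
have fc : continuous f by case: f12 => ->.
have [U1 [U2 [oU1 oU2 U1q U2q' U12]]] := separate_closures lcX hX fqq'.
exists ([set w | U1 (f w.1) /\ U2 (f w.2)], (U1, U2)); split => //=.
  apply: (@open_preimage_pair _ _ (f \o fst) (f \o snd)) => //.
    by move=> x; exact: (continuous_comp (fstc x) (fc _)).
  by move=> x; exact: (continuous_comp (sndc x) (fc _)).
by right; split => //; exists f.
Qed.

(* Finitely many of the sets of [small_or_separated_nbhs] cover [P `*` P]; the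
   points of [N x0] lie on the same side as [x0] of each of the finitely many
   closures involved, so no pair in [N x0] is separated by them. *)
Lemma oscillation_nbhs : exists N : X -> set X, (forall x, nbhs x (N x)) /\
  forall x0 y0 q q', P q -> P q' -> N x0 (pi1 q) -> N x0 (pi1 q') ->
    N y0 (pi2 q) -> N y0 (pi2 q') -> `|h q - h q'| <= eps.
Proof.
have /choice[F HF] := small_or_separated_nbhs.
have [D _ PPD] : finite_subset_cover (P `*` P) (fun w => (F w).1) (P `*` P).
  apply: compact_finite_subcover (compact_setX cP cP) _ _.
    by move=> w _; case: (HF w).
  by move=> w Pw; exists w => //; case: (HF w).
pose N x0 := \bigcap_(w in [set` D])
  (avoid_closure (F w).2.1 x0 `&` avoid_closure (F w).2.2 x0).
exists N; split.
  by move=> x0; apply: filter_bigI => w _; apply: filterI; exact: nbhs_avoid_closure.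
move=> x0 y0 q q' Pq Pq' N1 N1' N2 N2'.
have [w Dw Fwq] := PPD (q, q') (conj Pq Pq').
have [_ _ [small|[U12 [f f12 sep]]]] := HF w; first exact: small _ Fwq.
have [z0 [Nq Nq']] : exists z0, N z0 (f q) /\ N z0 (f q').
  by case: f12 => ->; [exists x0 | exists y0].
have [U1q U2q'] := sep _ Fwq.
have : (closure (F w).2.1 `&` closure (F w).2.2) z0.
  split; apply: avoid_closureP; [exact: (Nq w Dw).1 | exact: U1q |
                                 exact: (Nq' w Dw).2 | exact: U2q'].
by rewrite U12.
Qed.

End oscillation.

Lemma dist_convex_combination_le (K : numDomainType) (J : finType)
    (w c : J -> K) (a eps : K) :
  (forall j, 0 <= w j) -> \sum_j w j = 1 ->
  (forall j, w j != 0 -> `|a - c j| <= eps) ->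
  `|a - \sum_j c j * w j| <= eps.
Proof.
move=> w0 w1 ac.
have -> : a - \sum_j c j * w j = \sum_j (a - c j) * w j.
  by rewrite (eq_bigr _ (fun j _ => mulrBl _ _ _)) sumrB -mulr_sumr w1 mulr1.
apply: le_trans (ler_norm_sum _ _ _) _.
rewrite -[leRHS]mulr1 -w1 mulr_sumr; apply: ler_sum => j _.
rewrite normrM (ger0_norm (w0 j)).
have [->|wj0] := eqVneq (w j) 0; first by rewrite !mulr0.
by rewrite ler_wpM2r // ac.
Qed.

Section product_approximation.
Variables (R : realType) (T X : topologicalType).
Hypotheses (lcX : locally_compact [set: X]) (hX : hausdorff_space X).
Variables (pi1 pi2 : T -> X) (P : set T).
Hypotheses (pi1c : continuous pi1) (pi2c : continuous pi2) (cP : compact P).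
Hypothesis pi_inj : forall q q', pi1 q = pi1 q' -> pi2 q = pi2 q' -> q = q'.

Lemma product_approximation (h : T -> Cplx R) (eps : R) :
  continuous h -> 0 < eps ->
  exists (J : finType) (a : J -> Cplx R) (f1 f2 : J -> X -> Cplx R),
    (forall j, Cc (f1 j) /\ Cc (f2 j)) /\
    forall q, P q -> `|h q - \sum_j a j * (f1 j (pi1 q) * f2 j (pi2 q))| <= (eps%:C)%C.
Proof.
move=> hc eps0; have epsC0 : 0 < (eps%:C)%C :> R[i] by rewrite ltcR.
have [N [Nx Nosc]] := oscillation_nbhs lcX hX pi1c pi2c cP pi_inj hc epsC0.
have cS : compact (pi1 @` P `|` pi2 @` P).
  by apply: compactU; apply: continuous_compact => //; exact: continuous_subspaceT.
have [J [phi [c [phic phi0 phiN phiK phi1]]]] :=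
  compact_partition_of_unity R lcX hX cS (fun x _ => Nx x).
have /choice[a Ha] : forall ij : J * J, exists a : Cplx R, forall q, P q ->
    phi ij.1 (pi1 q) != 0 -> phi ij.2 (pi2 q) != 0 -> `|h q - a| <= (eps%:C)%C.
  move=> [i j].
  have [[q0 [Pq0 iq0 jq0]]|none] :=
    pselect (exists q0, [/\ P q0, phi i (pi1 q0) != 0 & phi j (pi2 q0) != 0]).
    by exists (h q0) => q Pq iq jq; apply: (Nosc (c i) (c j)) => //; exact: phiN.
  by exists 0 => q Pq iq jq; exfalso; apply: none; exists q.
exists (J * J)%type, a, (fun ij x => (phi ij.1 x)%:C%C), (fun ij x => (phi ij.2 x)%:C%C).
split=> [ij|q Pq]; first by split; apply: Cc_realC.
under eq_bigr => ij _ do rewrite -rmorphM /=.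
apply: dist_convex_combination_le => [ij||[i j] /=].
- by rewrite ler0c mulr_ge0.
- rewrite -rmorph_sum -(pair_bigA _ (fun i j => phi i (pi1 q) * phi j (pi2 q))) /=.
  by rewrite -big_distrlr /= !phi1 ?mulr1 //; [right | left]; exists q.
- rewrite eq_complex /= eqxx andbT mulf_eq0 negb_or => /andP[iq jq].
  exact: (Ha (i, j)).
Qed.

End product_approximation.

Lemma CGCX_continuous (R : realType) (G X : topologicalType) (u : G -> X -> Cplx R) :
  locally_compact [set: X] -> CGCX u -> continuous (fun p : X * G => u p.2 p.1).
Proof.
move=> lcX [uc ug] [x0 g0]; apply/cvgrPdist_le => e /gt0_realC[eE e0].
have [V] := lcX x0 I; rewrite withinET => Vx0 [cV _].
have e20 : 0 < complex.Re e / 2 by rewrite divr_gt0.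
have e20C : 0 < ((complex.Re e / 2)%:C)%C :> R[i] by rewrite ltcR.
have ux0 : nbhs x0 [set x | `|u g0 x0 - u g0 x| <= ((complex.Re e / 2)%:C)%C].
  exact: (cvgrPdist_le _ _).1 (uc g0 x0) _ e20C.
exists (V `&` [set x | `|u g0 x0 - u g0 x| <= ((complex.Re e / 2)%:C)%C],
        [set g | forall x, V x -> `|u g x - u g0 x| <= ((complex.Re e / 2)%:C)%C]).
  by split => /=; [exact: filterI | exact: ug].
move=> [x g] /= [[Vx ux] ugx]; rewrite eE [complex.Re e]splitr raddfD /=.
by apply: le_trans (ler_distD (u g0 x) _ _) _; rewrite addrC lerD // distrC ugx.
Qed.

Lemma free_action_injective (G X : Type) (mul : G -> G -> G) (inv : G -> G) (e : G)
    (act : X -> G -> X) :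
  associative mul -> (forall a, mul e a = a /\ mul a e = a) ->
  (forall a, mul (inv a) a = e /\ mul a (inv a) = e) ->
  (forall x, act x e = x) -> (forall x g h, act (act x g) h = act x (mul g h)) ->
  free_action e act -> forall x, injective (act x).
Proof.
move=> mulA mul1 mulV act1 actM fr x g h gh.
have /fr gh1 : act x (mul g (inv h)) = x by rewrite -actM gh actM (mulV h).2 act1.
by rewrite -(mul1 g).2 -(mulV h).1 mulA gh1 (mul1 h).1.
Qed.

Section alpha_span.
Variables (R : realType) (G X : topologicalType) (act : X -> G -> X).

Lemma alpha_span_finType (J : finType) (a : J -> Cplx R) (f1 f2 : J -> X -> Cplx R) :
  (forall j, Cc (f1 j) /\ Cc (f2 j)) ->
  alpha_span act (fun g x => \sum_j a j * (f1 j x * f2 j (act x g))).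
Proof.
move=> Cf; exists #|J|, (a \o enum_val), (f1 \o enum_val), (f2 \o enum_val).
split=> [k|]; first exact: Cf.
apply/funext => g; apply/funext => x.
rewrite -(big_enum_val (fun j => a j * (f1 j x * f2 j (act x g)))) /=.
by apply: eq_bigl => j; rewrite inE.
Qed.

Lemma alpha_span_act_eq (v : G -> X -> Cplx R) (x : X) (g h : G) :
  alpha_span act v -> act x g = act x h -> v g x = v h x.
Proof. by move=> [n [c [f1 [f2 [_ ->]]]]] xgh; rewrite xgh. Qed.

End alpha_span.

Lemma free_kappa_dense (R : realType) (G X : topologicalType)
    (mul : G -> G -> G) (inv : G -> G) (e : G) (act : X -> G -> X) :
  is_topological_group mul inv e ->
  hausdorff_space X -> locally_compact [set: X] ->
  is_continuous_right_action mul e act ->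
  free_action e act -> kappa_dense (@alpha_span R G X act).
Proof.
move=> [mulA mul1 mulV _ _] hX lcX [act1 actM actc] fr u uC K L eps cK cL eps0.
have inj (p q : X * G) : p.1 = q.1 -> act p.1 p.2 = act q.1 q.2 -> p = q.
  case: p q => [x g] [_ h] /= <-.
  by move/(free_action_injective mulA mul1 mulV act1 actM fr) ->.
have fstc : continuous (@fst X G) by move=> ?; exact: cvg_fst.
have [J [a [f1 [f2 [Cf approx]]]]] := product_approximation lcX hX fstc actc
  (compact_setX cL cK) inj (CGCX_continuous lcX uC) eps0.
exists (fun g x => \sum_j a j * (f1 j x * f2 j (act x g))); split.
  exact: alpha_span_finType.
by move=> g x Kg Lx; exact: (approx (x, g)).
Qed.

Lemma kappa_dense_free (R : realType) (G X : topologicalType)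
    (mul : G -> G -> G) (e : G) (act : X -> G -> X) :
  hausdorff_space G -> locally_compact [set: G] ->
  is_continuous_right_action mul e act ->
  kappa_dense (@alpha_span R G X act) -> free_action e act.
Proof.
move=> hG lcG [act1 _ _] dense x g xg; apply: contrapT => ge.
have cle : closed [set e] by exact/accessible_closed_set1/hausdorff_accessible.
have sep := @locally_compact_completely_regular G R lcG hG g [set e] cle ge.
pose f := @Urysohn G R [set g] [set e].
have fg : f g = 0 by apply: (Urysohn_sub0 sep); exists g.
have fe : f e = 1 by apply: (Urysohn_sub1 sep); exists e.
pose u (h : G) (_ : X) : Cplx R := (f h)%:C%C.
have uC : CGCX u.
  split=> [h|g0 L eps _ eps0]; first exact: cst_continuous.
  have : nbhs g0 [set h | `|f g0 - f h| <= eps].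
    exact: (cvgrPdist_le _ _).1 (@Urysohn_continuous G R _ _ g0) _ eps0.
  by apply: filterS => h fh y _; rewrite -raddfB /= norm_realC lecR distrC.
have cK : compact ([set e] `|` [set g]) by apply: compactU; exact: compact_set1.
have q0 : 0 < 4^-1 :> R by rewrite invr_gt0.
have [v [/alpha_span_act_eq vx uv]] := dense u uC _ _ _ cK (@compact_set1 _ x) q0.
have vge : v g x = v e x by apply: vx; rewrite xg act1.
have uve := uv e x (or_introl erefl) erefl.
have uvg := uv g x (or_intror erefl) erefl.
have := ler_distD (v e x) (u e x) (u g x).
rewrite -{2}vge (distrC (v g x)) => /le_trans/(_ (lerD uve uvg)).
rewrite /u -raddfB /= norm_realC -raddfD /= lecR fe fg subr0 normr1.
lra.
Qed.

Theorem mainTheorem17 (R : realType) (G X : topologicalType)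
  (mul : G -> G -> G) (inv : G -> G) (e : G) (act : X -> G -> X) :
  is_topological_group mul inv e ->
  hausdorff_space G -> locally_compact [set: G] ->
  hausdorff_space X -> locally_compact [set: X] ->
  is_continuous_right_action mul e act ->
  (free_action e act <-> kappa_dense (@alpha_span R G X act)).
Proof.
move=> grp hG lcG hX lcX actG; split.
  exact: free_kappa_dense grp hX lcX actG.
exact: kappa_dense_free hG lcG actG.
Qed.
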